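(* Let $\{\varphi_i\}_{i=1}^N\subset S^{d-1}$ be a frame for $\mathbb{R}^d$ with frame operator $S_\Phi=\sum_{i=1}^N\varphi_i\varphi_i^\top$, and let $\{\psi_i\}_{i=1}^N$ be a dual frame to it (i.e. $x=\sum_i\langle x,\varphi_i\rangle\psi_i$ for all $x\in\mathbb{R}^d$). For each $i$ let $z_i=\psi_i-S_\Phi^{-1}\varphi_i$, and let $a:=\min_{i\ne j}\langle\varphi_i,S_\Phi^{-1}(\varphi_i-\varphi_j)\rangle$. If $\max_j\|z_j\|\le a/N$, then the identity permutation is the optimal permutation $\sigma$ for the mass transport problem between $\frac1N\sum_i\delta_{\varphi_i}$ and $\frac1N\sum_i\delta_{\psi_i}$, i.e. it minimizes $\frac1N\sum_{i=1}^N\|\varphi_i-\psi_{\sigma(i)}\|^2$ over all permutations $\sigma$ of $\{1,\dots,N\}$.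
   Context: $S^{d-1}$ is the unit sphere in $\mathbb{R}^d$. A finite frame is a finite spanning set of $\mathbb{R}^d$. *)

From HB Require Import structures.
From mathcomp Require Import all_boot all_order all_algebra all_fingroup.
Set Implicit Arguments. Unset Strict Implicit. Unset Printing Implicit Defensive.
Import Order.TTheory GRing.Theory Num.Theory.
Local Open Scope ring_scope.

Definition dotv (R : nzRingType) (d : nat) (u v : 'cV[R]_d) : R := (u^T *m v) 0 0.

Definition normv (R : rcfType) (d : nat) (u : 'cV[R]_d) : R := Num.sqrt (dotv u u).

(* A finite family spans R^d: the N x d matrix with rows phi_i^T has full row space *)
Definition is_frame (R : fieldType) (d N : nat) (phi : 'I_N -> 'cV[R]_d) : Prop :=
  row_full (\matrix_(i < N, k < d) phi i k 0).

Definition frame_op (R : nzRingType) (d N : nat) (phi : 'I_N -> 'cV[R]_d) : 'M[R]_d :=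
  \sum_(i < N) phi i *m (phi i)^T.

Definition is_dual_frame (R : nzRingType) (d N : nat) (phi psi : 'I_N -> 'cV[R]_d) : Prop :=
  forall x : 'cV[R]_d, x = \sum_(i < N) dotv x (phi i) *: psi i.

Definition transport_cost (R : rcfType) (d N : nat) (phi psi : 'I_N -> 'cV[R]_d)
  (s : 'S_N) : R :=
  N%:R^-1 * \sum_(i < N) normv (phi i - psi (s i)) ^+ 2.

(* Expanding the squares, the cost of a permutation [s] is a constant minus
   [(2/N) sum_i <phi_i, psi_(s i)>], so it suffices that every phi_i pairs best
   with its own partner: <phi_i, psi_k> <= <phi_i, psi_i> for all k.  Writing
   psi_k = S^-1 phi_k + z_k, the difference of the two sides is at least
   <phi_i, S^-1 (phi_i - phi_k)> - ||z_i|| - ||z_k|| by Cauchy-Schwarz, which the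
   hypothesis ||z_j|| <= a/N makes nonnegative as soon as N >= 2. *)
From HB Require Import structures.
From mathcomp Require Import all_boot all_order all_algebra all_fingroup.
From mathcomp Require Import ring lra zify.

Set Implicit Arguments.
Unset Strict Implicit.
Unset Printing Implicit Defensive.
Import Order.TTheory GRing.Theory Num.Theory.
Local Open Scope ring_scope.

Section InnerProduct.
Variables (R : rcfType) (d : nat).
Implicit Types u v w : 'cV[R]_d.

Lemma dotvE u v : dotv u v = \sum_k u k 0 * v k 0.
Proof. by rewrite /dotv !mxE; apply: eq_bigr => k _; rewrite mxE. Qed.

Lemma dotvC u v : dotv u v = dotv v u.
Proof. by rewrite !dotvE; apply: eq_bigr => k _; rewrite mulrC. Qed.

Lemma dotvDr u v w : dotv u (v + w) = dotv u v + dotv u w.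
Proof. by rewrite !dotvE -big_split; apply: eq_bigr => k _; rewrite mxE mulrDr. Qed.

Lemma dotvNr u v : dotv u (- v) = - dotv u v.
Proof. by rewrite !dotvE -sumrN; apply: eq_bigr => k _; rewrite mxE mulrN. Qed.

Lemma dotvZr u v (t : R) : dotv u (t *: v) = t * dotv u v.
Proof. by rewrite !dotvE mulr_sumr; apply: eq_bigr => k _; rewrite mxE mulrCA. Qed.

Lemma dotvBr u v w : dotv u (v - w) = dotv u v - dotv u w.
Proof. by rewrite dotvDr dotvNr. Qed.

Lemma dotvBl u v w : dotv (v - w) u = dotv v u - dotv w u.
Proof. by rewrite dotvC dotvBr !(dotvC u). Qed.

Lemma dotvZl u v (t : R) : dotv (t *: v) u = t * dotv v u.
Proof. by rewrite dotvC dotvZr dotvC. Qed.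

Lemma dotvv_ge0 u : 0 <= dotv u u.
Proof. by rewrite dotvE; apply: sumr_ge0 => k _; rewrite -expr2 sqr_ge0. Qed.

Lemma normv_ge0 u : 0 <= normv u.
Proof. exact: sqrtr_ge0. Qed.

Lemma normv_sqr u : normv u ^+ 2 = dotv u u.
Proof. by rewrite /normv sqr_sqrtr // dotvv_ge0. Qed.

Lemma normvN u : normv (- u) = normv u.
Proof. by rewrite /normv dotvNr dotvC dotvNr opprK. Qed.

Lemma oppnorm_le_dotv u w : normv u = 1 -> - normv w <= dotv u w.
Proof.
move=> u1; have uu : dotv u u = 1 by rewrite -normv_sqr u1 expr1n.
have ww : dotv w w = normv w ^+ 2 by rewrite normv_sqr.
(* expand 0 <= ||w - <u, w> u||^2 = ||w||^2 - <u, w>^2 *)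
have := dotvv_ge0 (w - dotv u w *: u).
rewrite dotvBl !dotvBr !dotvZl !dotvZr uu ww (dotvC w u).
by have := normv_ge0 w; nra.
Qed.

Lemma dotv_perturb_le u qi qk zi zk :
  normv u = 1 -> normv zi + normv zk <= dotv u (qi - qk) ->
  dotv u (qk + zk) <= dotv u (qi + zi).
Proof.
move=> u1 margin.
have lbi : - normv zi <= dotv u zi by apply: oppnorm_le_dotv.
have lbk : - normv (- zk) <= dotv u (- zk) by apply: oppnorm_le_dotv.
rewrite normvN dotvNr in lbk.
rewrite dotvBr in margin; rewrite !dotvDr; lra.
Qed.

End InnerProduct.

Section Transport.
Variables (R : rcfType) (d N : nat) (phi psi : 'I_N -> 'cV[R]_d).

Lemma sum_normv_sqr_perm (s : 'S_N) :
  \sum_i normv (phi i - psi (s i)) ^+ 2 =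
  \sum_i dotv (phi i) (phi i) + \sum_i dotv (psi i) (psi i)
  - 2 * \sum_i dotv (phi i) (psi (s i)).
Proof.
rewrite [\sum_i dotv (psi i) _](reindex_inj (@perm_inj _ s)) /=.
rewrite mulr_sumr -big_split -sumrB.
apply: eq_bigr => i _ /=.
by rewrite normv_sqr dotvBl !dotvBr (dotvC (psi (s i)) (phi i)); ring.
Qed.

Lemma transport_cost_id_le (s : 'S_N) :
  (forall i, dotv (phi i) (psi (s i)) <= dotv (phi i) (psi i)) ->
  transport_cost phi psi 1 <= transport_cost phi psi s.
Proof.
move=> pair_le; rewrite /transport_cost.
apply: ler_wpM2l; first by rewrite invr_ge0 ler0n.
rewrite !sum_normv_sqr_perm lerB // ler_pM2l //.
by apply: ler_sum => i _; rewrite perm1.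
Qed.

End Transport.

Lemma ord_neq_gt1 n (i j : 'I_n) : i != j -> (1 < n)%N.
Proof.
move=> ij; have : nat_of_ord i != j by [].
have := ltn_ord i; have := ltn_ord j.
by move: (nat_of_ord i) (nat_of_ord j) => a b; lia.
Qed.

Lemma addr_le_of_le_divn (R : realFieldType) n (a x y : R) : (1 < n)%N ->
  0 <= x -> x <= a / n%:R -> y <= a / n%:R -> x + y <= a.
Proof.
move=> n_gt1 x_ge0 xa ya.
have n2 : 2 <= n%:R :> R by rewrite ler_nat.
have -> : a = a / n%:R * n%:R by rewrite divfK // pnatr_eq0; lia.
by move: (a / n%:R) xa ya => b; nra.
Qed.

Theorem mainTheorem10 (R : rcfType) (d N : nat)
  (phi psi : 'I_N -> 'cV[R]_d)
  (hunit : forall i, normv (phi i) = 1)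
  (hframe : is_frame phi)
  (hdual : is_dual_frame phi psi) :
  let Sinv := invmx (frame_op phi) in
  let z := fun i => psi i - Sinv *m phi i in
  (* max_j ||z_j|| <= a / N, with a = min_{i<>k} <phi_i, S^{-1}(phi_i - phi_k)> *)
  (forall j i k : 'I_N, i != k ->
     normv (z j) <= dotv (phi i) (Sinv *m (phi i - phi k)) / N%:R) ->
  forall s : 'S_N, transport_cost phi psi 1 <= transport_cost phi psi s.
Proof.
(* [hframe] and [hdual] only give [Sinv] its meaning: the argument works for
   any matrix in its place. *)
move=> Sinv z small_z s; apply: transport_cost_id_le => i.
have [<- // | i_neq_si] := eqVneq i (s i).
have psiE j : psi j = Sinv *m phi j + z j by rewrite /z addrC subrK.
rewrite !psiE; apply: dotv_perturb_le => //.
rewrite -mulmxBr.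
apply: addr_le_of_le_divn (ord_neq_gt1 i_neq_si) (normv_ge0 _) _ _;
  exact: small_z.
Qed.
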